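(* Let $K$ be a virtual knot with classical crossing number $c(K)=n$, and suppose $K$ has a Gauss code $\omega_K$ (coming from a diagram of $K$ with $n$ classical crossings) with $M(\omega_K)=n$. Then $n=\tau(K)=\rho(K)$.
   Context: Mosaic tiles are the eleven standard unit-square tiles $T_0,\dots,T_{10}$ ($T_0$ blank; $T_1,\dots,T_8$ non-crossing tiles with one or two arcs; $T_9,T_{10}$ the two crossing tiles, each containing a horizontal and a vertical strand crossing at the center). A virtual rectangular mosaic is an $m\times n$ array of tiles together with a pairing of the $2(m+n)$ boundary unit edges whose quotient is a closed orientable surface carrying a knot diagram; it represents a virtual knot. A row mosaic is a $1\times n$ virtual rectangular mosaic. The tile number $\tau(K)$ is the minimal number of tiles of a virtual rectangular mosaic representing $K$; the row number $\rho(K)$ is the minimal $n$ such that $K$ is represented by a $1\times n$ row mosaic. The classical crossing number $c(K)$ is the minimal number of classical crossings in a virtual diagram of $K$. A Gauss code of a diagram with classical crossings labeled $1,\dots,n$ is the cyclic sequence of length $2n$ recording, while traversing the knot, each classical crossing passed (with over/under and sign information). $M(\omega_K)$ denotes the length of a longest consecutive subsequence of $\omega_K$ in which no crossing label appears twice. *)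

From Stdlib Require Import Relations.
From mathcomp Require Import all_boot.

Set Implicit Arguments.
Unset Strict Implicit.
Unset Printing Implicit Defensive.

(* An entry of a Gauss code: (crossing label, passes over?, sign),    *)
(* sign = true means a positive crossing.                             *)
Definition ent := (nat * bool * bool)%type.
Definition gcode := seq ent.

Definition lab (e : ent) : nat := e.1.1.
Definition ovr (e : ent) : bool := e.1.2.
Definition sgn (e : ent) : bool := e.2.
Definition labels (w : gcode) : seq nat := map lab w.

Definition gc_wf (w : gcode) : bool :=
  all (fun e => (count (fun e' => lab e' == lab e) w == 2) &&
                has (fun e' => [&& lab e' == lab e, ovr e' != ovr e & sgn e' == sgn e]) w) w.

(* Valid Reidemeister III configurations: strands Top (over at a, b), *)
(* Middle (under at a, over at c), Bottom (under at b, c).  The       *)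
(* booleans t, mm, bb record the order along each strand; realizability *)
(* by three lines in the plane forces the sign conditions below.      *)
Definition R3config (pT pM pB : gcode) : Prop :=
  exists (a b c : nat) (sa sb sc t mm bb : bool),
    [/\ uniq [:: a; b; c],
        pT = (if t then [:: (a, true, sa); (b, true, sb)]
                   else [:: (b, true, sb); (a, true, sa)]),
        pM = (if mm then [:: (a, false, sa); (c, true, sc)]
                    else [:: (c, true, sc); (a, false, sa)]),
        pB = (if bb then [:: (b, false, sb); (c, false, sc)]
                    else [:: (c, false, sc); (b, false, sb)]) &
        ((t == mm) = (sb == sc)) /\ ((t == bb) = (sa == sc))].

Inductive gmove : gcode -> gcode -> Prop :=
| GM_rot w : gmove w (rot 1 w)
| GM_relabel w (f : nat -> nat) : injective f ->
    gmove w (map (fun e => (f (lab e), ovr e, sgn e)) w)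
| GM_R1 x y a o s : a \notin labels (x ++ y) ->
    gmove (x ++ y) (x ++ [:: (a, o, s); (a, ~~ o, s)] ++ y)
| GM_R2 x y a b s (par : bool) : a != b ->
    a \notin labels (x ++ y) -> b \notin labels (x ++ y) ->
    gmove (x ++ y)
          (x ++ [:: (a, true, s); (b, true, ~~ s)] ++ y ++
             (if par then [:: (a, false, s); (b, false, ~~ s)]
                     else [:: (b, false, ~~ s); (a, false, s)]))
| GM_R3 x1 x2 x3 p1 p2 p3 pT pM pB :
    R3config pT pM pB -> perm_eq [:: p1; p2; p3] [:: pT; pM; pB] ->
    gmove (x1 ++ p1 ++ x2 ++ p2 ++ x3 ++ p3)
          (x1 ++ rev p1 ++ x2 ++ rev p2 ++ x3 ++ rev p3).

Definition gequiv : relation gcode := clos_refl_sym_trans gcode gmove.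

Definition Mw (w : gcode) : nat :=
  \max_(i < size w)
    \max_(k < (size w).+1 | uniq (labels (take k (drop i (w ++ w))))) k.

Definition side := 'I_4.
Definition sN : side := @Ordinal 4 0 isT.
Definition sE : side := @Ordinal 4 1 isT.
Definition sS : side := @Ordinal 4 2 isT.
Definition sW : side := @Ordinal 4 3 isT.

Definition tile := 'I_11.

(* partner side of side s through a strand of tile t (None: no connection point) *)
Definition conn_nat (t s : nat) : option nat :=
  match t, s with
  | 1, 0 => Some 3 | 1, 3 => Some 0          (* arc N-W *)
  | 2, 0 => Some 1 | 2, 1 => Some 0          (* arc N-E *)
  | 3, 1 => Some 2 | 3, 2 => Some 1          (* arc E-S *)
  | 4, 2 => Some 3 | 4, 3 => Some 2          (* arc S-W *)
  | 5, 1 => Some 3 | 5, 3 => Some 1          (* horizontal line *)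
  | 6, 0 => Some 2 | 6, 2 => Some 0          (* vertical line *)
  | 7, 0 => Some 3 | 7, 3 => Some 0 | 7, 1 => Some 2 | 7, 2 => Some 1
  | 8, 0 => Some 1 | 8, 1 => Some 0 | 8, 2 => Some 3 | 8, 3 => Some 2
  | 9, _ => Some ((s + 2) %% 4)      (* crossing, horizontal strand over *)
  | 10, _ => Some ((s + 2) %% 4)     (* crossing, vertical strand over *)
  | _, _ => None
  end.

Definition conn (t : tile) (s : side) : option side :=
  omap (@inord 3) (conn_nat t s).

Definition port (m n : nat) := ('I_m * 'I_n * side)%type.

(* an m x n array of tiles, with a pairing of boundary unit edges       *)
(* (only its values on boundary edges matter).                          *)
Record mosaic (m n : nat) := Mosaic {
  mtile : {ffun 'I_m * 'I_n -> tile};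
  mpair : port m n -> port m n }.

Section Mosaics.
Variables (m n : nat) (X : mosaic m n).

Definition boundary (p : port m n) : bool :=
  let: (i, j, s) := p in
  [|| (s == sN) && (i == 0 :> nat), (s == sS) && (i == m.-1 :> nat),
      (s == sW) && (j == 0 :> nat) | (s == sE) && (j == n.-1 :> nat)].

Definition neighbor (p : port m n) : port m n :=
  let: (i, j, s) := p in
  if s == sN then (insubd i i.-1, j, sS)
  else if s == sS then (insubd i i.+1, j, sN)
  else if s == sW then (i, insubd j j.-1, sE)
  else (i, insubd j j.+1, sW).

Definition nextp (p : port m n) : port m n :=
  if boundary p then mpair X p else neighbor p.

Definition tile_at (p : port m n) : tile := mtile X p.1.

Definition cp (p : port m n) : bool := conn (tile_at p) p.2 != None.

Definition partner (p : port m n) : port m n :=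
  (p.1, odflt p.2 (conn (tile_at p) p.2)).

Definition step (p : port m n) : port m n := nextp (partner p).

(* X is a virtual rectangular mosaic carrying a knot diagram (one component) *)
Definition is_vrm : Prop :=
  [/\ forall p, boundary p ->
        [/\ boundary (mpair X p), mpair X (mpair X p) = p & mpair X p != p],
      forall p, cp p = cp (nextp p) &
      exists p0, cp p0 /\
        forall q, cp q -> fconnect step p0 q \/ fconnect step p0 (partner q)].

Definition crossing_tile (p : port m n) : bool :=
  (val (tile_at p) == 9) || (val (tile_at p) == 10).

Definition lab_of (p : port m n) : nat := p.1.1 * n + p.1.2.

Definition ovr_of (p : port m n) : bool :=
  if val (tile_at p) == 9 then (p.2 == sE) || (p.2 == sW)
  else (p.2 == sN) || (p.2 == sS).

(* sign (positive iff det(dir over, dir under) > 0, with north = up) *)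
Definition sgn_of (q p : port m n) : bool :=
  let h := fconnect step q (p.1, sW) in  (* horizontal strand runs east *)
  let v := fconnect step q (p.1, sS) in  (* vertical strand runs north *)
  if val (tile_at p) == 9 then h == v else h != v.

Definition read_code (q : port m n) : gcode :=
  [seq (lab_of p, ovr_of p, sgn_of q p)
     | p <- traject step q (fingraph.order step q) & crossing_tile p].

Definition represents (K : gcode) : Prop :=
  exists q, cp q /\ gequiv (read_code q) K.

End Mosaics.

Definition least (P : nat -> Prop) (k : nat) : Prop :=
  P k /\ forall j, P j -> k <= j.

Definition crossing_number (K : gcode) (k : nat) : Prop :=
  least (fun k => exists w, [/\ gc_wf w, gequiv w K & size w = k.*2]) k.

Definition tile_number (K : gcode) (t : nat) : Prop :=
  least (fun t => exists (a b : nat) (X : mosaic a b),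
                    [/\ is_vrm X, represents X K & t = a * b]) t.

Definition row_number (K : gcode) (r : nat) : Prop :=
  least (fun r => exists X : mosaic 1 r, is_vrm X /\ represents X K) r.

From Stdlib Require Import Relations.
From mathcomp Require Import all_boot zify.

Set Implicit Arguments.
Unset Strict Implicit.
Unset Printing Implicit Defensive.

(* A virtual rectangular mosaic reads off a Gauss code of the knot in which
   every crossing tile contributes one crossing, so c(K) <= tau(K) <= rho(K).
   Conversely, M(omega) = n means that some rotation of omega has n consecutive
   entries with distinct labels; as every label occurs twice among the 2n
   entries, each label then occurs exactly once in either half.  Put the n
   crossings of the first half side by side in a 1 x n row of crossing tiles,
   so that the horizontal strand reads the first half from west to east, and
   glue the boundary edges so that the strand then runs through the vertical
   strands of the tiles in the order of the second half.  The type of each tile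
   and the direction of its vertical strand reproduce the over/under data and
   the signs, so the row represents K and rho(K) <= n. *)

Lemma count_mem_uniqC (T : eqType) (s1 s2 : seq T) : uniq s1 -> uniq s2 ->
  count (mem s2) s1 = count (mem s1) s2.
Proof.
move=> u1 u2; rewrite -!size_filter; apply: perm_size.
by apply: uniq_perm; rewrite ?filter_uniq // => x; rewrite !mem_filter andbC.
Qed.

Lemma uniq_map_inj_in (T1 T2 : eqType) (f : T1 -> T2) s :
  uniq (map f s) -> {in s &, injective f}.
Proof.
elim: s => [|a s IH] //= /andP[na u] x y; rewrite !inE.
case/orP => [/eqP->|xs]; case/orP => [/eqP->|ys] // E.
- by move: na; rewrite E map_f.
- by move: na; rewrite -E map_f.
- exact: IH.
Qed.

Lemma val_insubd_lt m (i : 'I_m) k : k < m -> val (insubd i k) = k.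
Proof. by move=> h; rewrite val_insubd h. Qed.

Section PairSwap.
Variables (T : eqType) (A B : seq T).
Hypotheses (uAB : uniq (A ++ B)) (sAB : size A = size B).

Definition pair_swap (p : T) : T :=
  if p \in A then nth p B (index p A) else if p \in B then nth p A (index p B) else p.

Lemma pair_swapA x k : k < size A -> pair_swap (nth x A k) = nth x B k.
Proof.
move=> hk; move: uAB; rewrite cat_uniq => /andP[uA _].
by rewrite /pair_swap mem_nth // index_uniq //; apply: set_nth_default; rewrite -sAB.
Qed.

Lemma pair_swapB x k : k < size B -> pair_swap (nth x B k) = nth x A k.
Proof.
move=> hk; move: uAB; rewrite cat_uniq => /and3P[_ dAB uB].
have nA : nth x B k \notin A.
  by apply: contra dAB => h; apply/hasP; exists (nth x B k) => //; apply: mem_nth.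
rewrite /pair_swap (negbTE nA) mem_nth // index_uniq //.
by apply: set_nth_default; rewrite sAB.
Qed.

Lemma pair_swap_inv p : p \in A ++ B ->
  [/\ pair_swap p \in A ++ B, pair_swap (pair_swap p) = p & pair_swap p != p].
Proof.
have neqAB x i j : i < size A -> j < size B -> nth x A i != nth x B j.
  move=> hi hj; move: uAB; rewrite cat_uniq => /and3P[_ /hasPn dAB _].
  by apply/eqP => E; move: (dAB _ (mem_nth x hj)); rewrite -E mem_nth.
rewrite mem_cat => /orP[] hp.
- have hk : index p A < size A by rewrite index_mem.
  rewrite -(nth_index p hp) pair_swapA // pair_swapB -?sAB //.
  by rewrite mem_cat mem_nth ?orbT -?sAB // eq_sym neqAB -?sAB.
- have hk : index p B < size B by rewrite index_mem.
  rewrite -(nth_index p hp) pair_swapB // pair_swapA ?sAB //.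
  by rewrite mem_cat mem_nth ?sAB // neqAB ?sAB.
Qed.

End PairSwap.

Lemma injective_ext_nth (s1 s2 : seq nat) : uniq s1 -> uniq s2 -> size s1 = size s2 ->
  exists2 f : nat -> nat, injective f &
    forall k, k < size s1 -> f (nth 0 s1 k) = nth 0 s2 k.
Proof.
move=> u1 u2 sz; set U := undup (s1 ++ s2).
set L1 := s1 ++ [seq x <- U | x \notin s1]; set L2 := s2 ++ [seq x <- U | x \notin s2].
have uL (s : seq nat) : uniq s -> uniq (s ++ [seq x <- U | x \notin s]).
  move=> us; rewrite cat_uniq us filter_uniq ?undup_uniq // andbT.
  by apply/hasPn => x; rewrite mem_filter => /andP[].
have mL : L1 =i L2.
  move=> x; rewrite !mem_cat !mem_filter mem_undup mem_cat.
  by case: (x \in s1); case: (x \in s2).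
have szL : size L1 = size L2 by apply/perm_size/uniq_perm; rewrite ?uL.
exists (fun x => if x \in L1 then nth 0 L2 (index x L1) else x).
  move=> x y /=; case hx: (x \in L1); case hy: (y \in L1) => // E.
  - move: E => /eqP; rewrite nth_uniq ?uL // -?szL ?index_mem // => /eqP E.
    by rewrite -(nth_index 0 hx) E nth_index.
  - by move: hy; rewrite -E mL mem_nth // -szL index_mem.
  - by move: hx; rewrite E mL mem_nth // -szL index_mem.
move=> k hk /=.
have hk1 : k < size L1 by rewrite size_cat ltn_addr.
have -> : nth 0 s1 k = nth 0 L1 k by rewrite nth_cat hk.
by rewrite mem_nth // index_uniq ?uL // nth_cat -sz hk.
Qed.

Definition ent0 : ent := (0, false, false).

(* The entry of [h] carrying the label of [d]: its other occurrence when [d] is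
   outside [h]. *)
Definition mate (h : gcode) (d : ent) : ent := nth ent0 h (index (lab d) (labels h)).

Definition index_relabel (h w : gcode) : gcode :=
  [seq (index (lab e) (labels h), ovr e, sgn e) | e <- w].

Lemma gequiv_rot (w : gcode) i : i <= size w -> gequiv w (rot i w).
Proof.
elim: i => [|i IH] hi; first by rewrite rot0; apply: rst_refl.
apply: rst_trans (IH (ltnW hi)) _.
by rewrite -add1n rotD //; apply/rst_step/GM_rot.
Qed.

Lemma gc_wf_rot (w : gcode) i : gc_wf w -> gc_wf (rot i w).
Proof.
have P : perm_eq (rot i w) w by rewrite perm_rot.
rewrite /gc_wf (perm_all _ P) => /allP H; apply/allP => e he.
by rewrite ((permP P) _) (perm_has _ P) H.
Qed.

Lemma gequiv_index_relabel (h w : gcode) : uniq (labels h) ->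
  {subset labels w <= labels h} -> gequiv w (index_relabel h w).
Proof.
move=> uh sub.
have szeq : size (labels h) = size (iota 0 (size h)) by rewrite size_iota size_map.
have [f injf hf] := injective_ext_nth uh (iota_uniq 0 (size h)) szeq.
have -> : index_relabel h w = [seq (f (lab e), ovr e, sgn e) | e <- w].
  apply/eq_in_map => e /(map_f lab)/sub le.
  have ki : index (lab e) (labels h) < size (labels h) by rewrite index_mem.
  by rewrite -{2}(nth_index 0 le) hf // nth_iota // -(size_map lab).
exact/rst_step/GM_relabel.
Qed.

Lemma size_gc_wf w : gc_wf w -> size w = (size (undup (labels w))).*2.
Proof.
move=> /allP wf.
rewrite -(size_map lab w) -(perm_size (perm_count_undup (labels w))).
rewrite size_flatten /shape -map_comp.
rewrite (_ : map _ _ = map (fun _ => 2) (undup (labels w))); last first.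
  apply/eq_in_map => x; rewrite mem_undup => /mapP [e ew ->] /=; rewrite size_nseq.
  by have /andP[/eqP c _] := wf e ew; rewrite /labels count_map.
by elim: (undup (labels w)) => //= x s ->; rewrite doubleS.
Qed.

(* A window of [w ++ w] starting inside [w] is a prefix of a rotation of [w]. *)
Lemma Mw_witness (w : gcode) : 0 < size w ->
  exists2 i, i < size w & uniq (labels (take (Mw w) (rot i w))).
Proof.
move=> w0; rewrite /Mw.
have c1 : 0 < #|'I_(size w)| by rewrite card_ord.
have [i ->] := eq_bigmax (fun i : 'I_(size w) =>
   \max_(k < (size w).+1 | uniq (labels (take k (drop i (w ++ w))))) k) c1.
have c2 : 0 < #|[pred k : 'I_(size w).+1 | uniq (labels (take k (drop i (w ++ w))))]|.
  by apply/card_gt0P; exists ord0; rewrite inE take0.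
have [k] := eq_bigmax_cond (fun k : 'I_(size w).+1 => nat_of_ord k) c2.
rewrite inE => uk ->; exists i => //.
have ltk := ltn_ord k; rewrite drop_cat ltn_ord /rot !take_cat size_drop in uk *.
case: ifP uk => // hk; rewrite take_takel //; lia.
Qed.

Section Halves.
Variables (w : gcode) (N : nat).
Hypotheses (wfw : gc_wf w) (szw : size w = N.*2) (uh : uniq (labels (take N w))).
Local Notation h := (take N w).
Local Notation v := (drop N w).

Lemma labels_take_sub_drop : {subset labels h <= labels v}.
Proof.
have /allP wfa := wfw.
move=> _ /mapP [e eh ->]; have /andP[/eqP c _] := wfa e (mem_take eh).
have ch : count (fun e' => lab e' == lab e) h = 1.
  by rewrite -(count_map lab (pred1 (lab e))) count_uniq_mem // map_f.
have : 0 < count (fun e' => lab e' == lab e) v.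
  by move: c; rewrite -{1}(cat_take_drop N w) count_cat ch; lia.
by rewrite -has_count => /hasP [e' e'v /eqP <-]; apply: map_f.
Qed.

Lemma size_labels_drop_take : size (labels v) <= size (labels h).
Proof. by rewrite !size_map size_drop size_take szw; case: ifP; lia. Qed.

Lemma uniq_labels_drop : uniq (labels v).
Proof. exact: leq_size_uniq uh labels_take_sub_drop size_labels_drop_take. Qed.

Lemma labels_take_drop : labels h =i labels v.
Proof. by have [] := uniq_min_size uh labels_take_sub_drop size_labels_drop_take. Qed.

Lemma mate_drop d : d \in v -> ovr d = ~~ ovr (mate h d) /\ sgn d = sgn (mate h d).
Proof.
move=> dv; have /allP wfa := wfw.
have /andP[_ /hasP [e ew /and3P[/eqP le /negbTE oe /eqP se]]] := wfa d (mem_drop dv).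
have eh : e \in h.
  move: ew; rewrite -{1}(cat_take_drop N w) mem_cat => /orP[] // ev.
  have ed : e = d by apply: (uniq_map_inj_in uniq_labels_drop).
  by rewrite ed eqxx in oe.
rewrite /mate -le (nth_index_map _ (uniq_map_inj_in uh)) // se.
by split => //; case: (ovr d) oe; case: (ovr e).
Qed.

End Halves.

(** * Reading a Gauss code off a mosaic *)

Lemma conn_nat_inv (t s s' : nat) : s < 4 -> conn_nat t s = Some s' ->
  [/\ s' < 4, conn_nat t s' = Some s & s' != s].
Proof. by do 11?[case: t => [|t]]; do 4?[case: s => [|s]] => //= _ [<-]. Qed.

Lemma conn_inv t s s' : conn t s = Some s' -> conn t s' = Some s /\ s' != s.
Proof.
rewrite /conn; case E: (conn_nat t s) => [x|] //= [<-].
have [x4 E2 ne] := @conn_nat_inv t s x (ltn_ord s) E.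
rewrite inordK // E2 /=; split; last by rewrite -val_eqE /= inordK.
by congr Some; apply: val_inj; rewrite /= inordK.
Qed.

Lemma odd_side (s : side) :
  ((s == sE) || (s == sW)) = odd s /\ ((s == sN) || (s == sS)) = ~~ odd s.
Proof. by case: s => [[|[|[|[|s]]]] Hs]. Qed.

Section MosaicStrands.
Variables (a b : nat) (X : mosaic a b).
Implicit Types p q : port a b.

Lemma port_eq p q :
  val p.1.1 = val q.1.1 -> val p.1.2 = val q.1.2 -> val p.2 = val q.2 -> p = q.
Proof. by case: p q => [[i j] s] [[i' j'] s'] /= /val_inj-> /val_inj-> /val_inj->. Qed.

Lemma neighbor_inv p : ~~ boundary p ->
  [/\ ~~ boundary (neighbor p), neighbor (neighbor p) = p & neighbor p != p].
Proof.
case: p => [[i j] [[|[|[|[|s]]]] Hs]] //=; rewrite /neighbor /= ?orbF;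
  have li := ltn_ord i; have lj := ltn_ord j.
- move=> /eqP Hi0; have Hv : val (insubd i i.-1) = i.-1 by rewrite val_insubd_lt; lia.
  split; [|apply: port_eq|apply/eqP => -[]] => //=; rewrite Hv ?val_insubd_lt //; lia.
- move=> /eqP Hj0; have Hv : val (insubd j j.+1) = j.+1 by rewrite val_insubd_lt; lia.
  split; [|apply: port_eq|apply/eqP => -[]] => //=; rewrite Hv ?val_insubd_lt //; lia.
- move=> /eqP Hi0; have Hv : val (insubd i i.+1) = i.+1 by rewrite val_insubd_lt; lia.
  split; [|apply: port_eq|apply/eqP => -[]] => //=; rewrite Hv ?val_insubd_lt //; lia.
- move=> /eqP Hj0; have Hv : val (insubd j j.-1) = j.-1 by rewrite val_insubd_lt; lia.
  split; [|apply: port_eq|apply/eqP => -[]] => //=; rewrite Hv ?val_insubd_lt //; lia.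
Qed.

Lemma partnerK : involutive (partner X).
Proof.
case=> [ij s]; rewrite /partner /tile_at /=.
case E: (conn _ s) => [s'|] /=; last by rewrite E.
by have [-> _] := conn_inv E.
Qed.

Lemma cp_partner p : cp X (partner X p) = cp X p.
Proof.
case: p => [ij s]; rewrite /partner /cp /tile_at /=.
case E: (conn _ s) => [s'|] /=; last by rewrite E.
by have [-> _] := conn_inv E.
Qed.

Lemma partner_neq p : cp X p -> partner X p != p.
Proof.
case: p => [ij s]; rewrite /partner /cp /tile_at /=.
case E: (conn _ s) => [s'|] //= _.
by have [_ ne] := conn_inv E; apply/eqP => -[]; apply/eqP.
Qed.

Lemma crossing_partner p : crossing_tile X p ->
  cp X p /\ partner X p = (p.1, inord ((p.2 + 2) %% 4)).
Proof. by rewrite /crossing_tile /partner /cp /conn; case/orP => /eqP ->. Qed.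

Lemma crossing_tile_eq p p' : p'.1 = p.1 -> crossing_tile X p' = crossing_tile X p.
Proof. by rewrite /crossing_tile /tile_at => ->. Qed.

Lemma sgn_of_eq q p p' : p'.1 = p.1 -> sgn_of X q p' = sgn_of X q p.
Proof. by rewrite /sgn_of /tile_at => ->. Qed.

Lemma ovr_of_odd p :
  ovr_of X p = if val (tile_at X p) == 9 then odd p.2 else ~~ odd p.2.
Proof. by rewrite /ovr_of; have [-> ->] := odd_side p.2. Qed.

Lemma eq_lab_of p p' : (lab_of p' == lab_of p) = (p'.1 == p.1).
Proof.
rewrite /lab_of; case: p p' => [[i j] s] [[i' j'] s'] /=.
apply/eqP/eqP => [E|[-> ->]] //.
have hj := ltn_ord j; have hj' := ltn_ord j'.
have b0 : 0 < b by lia.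
have := congr1 (modn^~ b) E; have := congr1 (divn^~ b) E.
rewrite !modnMDl !modn_small // !divnMDl // !divn_small // !addn0.
by move=> /val_inj-> /val_inj->.
Qed.

Lemma lab_of_lt p : lab_of p < a * b.
Proof.
case: p => [[i j] s]; rewrite /lab_of /=; apply: (@leq_trans (i.+1 * b)).
  by rewrite mulSn addnC ltn_add2r.
by rewrite leq_mul2r ltn_ord orbT.
Qed.

Hypothesis HX : is_vrm X.

Lemma nextpK p : nextp X (nextp X p) = p /\ nextp X p != p.
Proof.
case: HX => Hb _ _; rewrite /nextp; case bp: (boundary p).
  by have [b1 b2 b3] := Hb p bp; rewrite b1 b2.
by have [n1 n2 n3] := neighbor_inv (negbT bp); rewrite (negbTE n1) n2.
Qed.

Lemma step_inj : injective (step X).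
Proof.
move=> x y; rewrite /step => /(congr1 (nextp X)).
by rewrite !(proj1 (nextpK _)) => /(congr1 (partner X)); rewrite !partnerK.
Qed.

Lemma cp_step p : cp X (step X p) = cp X p.
Proof. by case: HX => _ Hc _; rewrite /step -Hc cp_partner. Qed.

Lemma step_partner_step p : step X (partner X (step X p)) = partner X p.
Proof. by rewrite /step partnerK (proj1 (nextpK _)). Qed.

(* Peeling one [step] off both ends of the path shortens it by two, down to
   [partner p = p] or [nextp r = r]. *)
Lemma partner_notin_orbit k p : cp X p -> partner X p != iter k (step X) p.
Proof.
elim: k {-2}k (leqnn k) p => [|K IH] k hk p cpp.
  by rewrite (_ : k = 0); [exact: partner_neq | lia].
case: k hk => [|[|k]] hk.
- exact: partner_neq.
- by rewrite /= /step eq_sym; have [_ ->] := nextpK (partner X p).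
- apply/eqP => E.
  have E2 : partner X (step X p) = iter k.+1 (step X) p.
    by apply: step_inj; rewrite step_partner_step E.
  have /IH : k <= K by lia.
  by move=> /(_ (step X p)); rewrite cp_step -iterSr E2 eqxx => /(_ cpp).
Qed.

Lemma fconnect_partner x y : fconnect (step X) x y ->
  fconnect (step X) (partner X y) (partner X x).
Proof.
move=> /iter_findex <-; elim: (findex _ x y) => [|k IH] /=; first exact: connect0.
apply: connect_trans IH.
by have := fconnect1 (step X) (partner X (step X (iter k (step X) x)));
  rewrite step_partner_step.
Qed.

Lemma fconnect_stepC x y : fconnect (step X) x y = fconnect (step X) y x.
Proof. exact: (fconnect_sym step_inj). Qed.

Lemma orbit_cover q x : cp X q -> cp X x ->
  fconnect (step X) q x || fconnect (step X) q (partner X x).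
Proof.
case: HX => _ _ [p0 [_ H]] cq cx.
have [Hq|Hq] := H q cq.
- rewrite fconnect_stepC in Hq.
  by have [Hx|Hx] := H x cx; rewrite (connect_trans Hq Hx) ?orbT.
- have {}Hq : fconnect (step X) q (partner X p0).
    by have := fconnect_partner Hq; rewrite partnerK.
  have [Hx|Hx] := H x cx; have := fconnect_partner Hx;
    rewrite ?partnerK fconnect_stepC => Hx'; by rewrite (connect_trans Hq Hx') ?orbT.
Qed.

Lemma orbit_excl q x : cp X x ->
  ~~ (fconnect (step X) q x && fconnect (step X) q (partner X x)).
Proof.
move=> cx; apply/negP => /andP[h1 h2].
have h : fconnect (step X) x (partner X x).
  by rewrite fconnect_stepC in h1; exact: connect_trans h1 h2.
by have := partner_notin_orbit (findex (step X) x (partner X x)) cx;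
  rewrite iter_findex // eqxx.
Qed.

Section CrossingTile.
Variables (q : port a b) (t : 'I_a * 'I_b) (s0 : side).
Hypotheses (cq : cp X q) (ct : crossing_tile X (t, s0)).

Lemma orbit_opposite_side (s s' : side) : val s' = (s + 2) %% 4 ->
  fconnect (step X) q (t, s') = ~~ fconnect (step X) q (t, s).
Proof.
move=> hs'.
have [cs Ps] : cp X (t, s) /\ partner X (t, s) = (t, s').
  have [cs ->] := crossing_partner (ct : crossing_tile X (t, s)).
  by split=> //; congr pair; apply: val_inj; rewrite /= inordK ?hs' // ltn_mod.
have := orbit_cover cq cs; have := orbit_excl q cs; rewrite Ps.
by case: (fconnect _ q (t, s')); case: (fconnect _ q (t, s)).
Qed.

Lemma count_tile_orbit :
  count (mem (orbit (step X) q)) [:: (t, sN); (t, sE); (t, sS); (t, sW)] = 2.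
Proof.
rewrite /= -!fconnect_orbit (@orbit_opposite_side sW sE erefl).
rewrite (@orbit_opposite_side sN sS erefl); by do 2!case: (fconnect _ q _).
Qed.

Lemma orbit_other_strand (s : side) :
  exists2 s' : side, (t, s') \in orbit (step X) q & odd s' != odd s.
Proof.
have hE := @orbit_opposite_side sW sE erefl.
have hS := @orbit_opposite_side sN sS erefl.
case: (odd s).
- case hN: (fconnect (step X) q (t, sN)); [exists sN|exists sS];
    by rewrite -?fconnect_orbit ?hS ?hN.
- case hW: (fconnect (step X) q (t, sW)); [exists sW|exists sE];
    by rewrite -?fconnect_orbit ?hE ?hW.
Qed.

End CrossingTile.

(* Each crossing tile is visited twice, once along each of its strands, and
   the two visits carry opposite over/under data. *)
Lemma read_code_wf q : cp X q -> gc_wf (read_code X q).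
Proof.
move=> cq; set F := fun p => (lab_of p, ovr_of X p, sgn_of X q p).
have -> : read_code X q = map F [seq p <- orbit (step X) q | crossing_tile X p] by [].
apply/allP => e /mapP [[t s]]; rewrite mem_filter => /andP[ct _] ->{e}.
apply/andP; split.
  rewrite count_map count_filter.
  rewrite (@eq_count _ _ (mem [:: (t, sN); (t, sE); (t, sS); (t, sW)])); last first.
    move=> [t' s'] /=; rewrite eq_lab_of !inE !xpair_eqE.
    case: (t' =P t) => [->|_] //=; rewrite (crossing_tile_eq (p:=(t, s))) // ct.
    by case: s' => [[|[|[|[|s']]]] Hs].
  rewrite count_mem_uniqC ?orbit_uniq ?(count_tile_orbit cq ct) //=.
  by rewrite !inE !xpair_eqE eqxx.
have [s' s'O odds'] := orbit_other_strand cq ct s.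
apply/hasP; exists (F (t, s')).
  by apply: map_f; rewrite mem_filter s'O andbT (crossing_tile_eq (p:=(t, s))).
rewrite /F /= eq_lab_of eqxx (sgn_of_eq q (p:=(t, s)) (p':=(t, s'))) // eqxx andbT.
by rewrite !ovr_of_odd /tile_at /=; case: (_ == 9); move: odds'; do 2!case: odd.
Qed.

End MosaicStrands.

Lemma crossing_number_le_area (K : gcode) n a b (X : mosaic a b) :
  is_vrm X -> represents X K -> crossing_number K n -> n <= a * b.
Proof.
move=> HX [q [cq eqv]] [_ Hmin].
have wf := read_code_wf HX cq.
apply: leq_trans (Hmin _ (ex_intro _ _ (And3 wf eqv (size_gc_wf wf)))) _.
rewrite -[X in _ <= X](size_iota 0); apply: uniq_leq_size; first exact: undup_uniq.
move=> x; rewrite mem_undup => /mapP [e /mapP [p _ ->] ->].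
by rewrite mem_iota /= lab_of_lt.
Qed.

(** * A row mosaic realizing a Gauss code split into two halves *)

Section RowMosaic.
Variables (n' : nat) (h v : gcode).
Local Notation N := n'.+1.
Hypotheses (hh : size h = N) (hv : size v = N) (uh : uniq (labels h))
  (uv : uniq (labels v)) (mhv : labels h =i labels v)
  (hvd : forall d, d \in v -> ovr d = ~~ ovr (mate h d) /\ sgn d = sgn (mate h d)).

(* Tile [j] carries the crossing of the j-th entry of [h]; the k-th entry of
   [v] is the second visit to tile [vtile k]. *)
Definition hent j := nth ent0 h j.
Definition vtile k := index (lab (nth ent0 v k)) (labels h).

Lemma size_labels_h : size (labels h) = N. Proof. by rewrite size_map. Qed.
Lemma size_labels_v : size (labels v) = N. Proof. by rewrite size_map. Qed.

Lemma lab_nth_v k : k < N -> lab (nth ent0 v k) = nth 0 (labels v) k.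
Proof. by move=> hk; rewrite (nth_map ent0) ?hv. Qed.
Lemma lab_hent k : k < N -> lab (hent k) = nth 0 (labels h) k.
Proof. by move=> hk; rewrite (nth_map ent0) ?hh. Qed.

Lemma vtile_lt k : k < N -> vtile k < N.
Proof.
move=> hk; rewrite /vtile -size_labels_h index_mem mhv lab_nth_v //.
by apply: mem_nth; rewrite size_labels_v.
Qed.

Lemma vtile_inj k1 k2 : k1 < N -> k2 < N -> vtile k1 = vtile k2 -> k1 = k2.
Proof.
move=> h1 h2; rewrite /vtile => /index_inj E.
have E' : nth 0 (labels v) k1 = nth 0 (labels v) k2.
  have m1 : lab (nth ent0 v k1) \in labels h.
    by rewrite mhv lab_nth_v ?mem_nth ?size_labels_v.
  have m2 : lab (nth ent0 v k2) \in labels h.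
    by rewrite mhv lab_nth_v ?mem_nth ?size_labels_v.
  by rewrite -!lab_nth_v //; apply: E.
by apply/eqP; rewrite -(nth_uniq 0 _ _ uv) ?size_labels_v // E'.
Qed.

Lemma vtile_surj j : j < N -> exists2 k, k < N & vtile k = j.
Proof.
move=> hj; set l := nth 0 (labels h) j.
have hm : l \in labels v by rewrite -mhv mem_nth ?size_labels_h.
have hk : index l (labels v) < N by rewrite -size_labels_v index_mem.
exists (index l (labels v)) => //.
by rewrite /vtile lab_nth_v ?nth_index ?index_uniq ?size_labels_h.
Qed.

(* The vertical strand of tile [j] runs north iff [upward j]; as the horizontal
   strand runs east, this gives the crossing the sign of [hent j]. *)
Definition upward j := sgn (hent j) == ovr (hent j).
Definition west j : port 1 N := (ord0, inord j, sW).
Definition vin k : port 1 N :=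
  (ord0, inord (vtile k), if upward (vtile k) then sS else sN).
Definition vout k : port 1 N :=
  (ord0, inord (vtile k), if upward (vtile k) then sN else sS).
Definition east_end : port 1 N := (ord0, ord_max, sE).
(* The gluing pairs the k-th items of [out_ports] and [in_ports]: the east end
   leads into the first vertical strand, each vertical strand into the next,
   and the last one back to the west end of the row. *)
Definition out_ports := east_end :: map vout (iota 0 N).
Definition in_ports := rcons (map vin (iota 0 N)) (west 0).
Definition row_tiles : {ffun 'I_1 * 'I_N -> tile} :=
  [ffun ij : 'I_1 * 'I_N => if ovr (hent ij.2) then (inord 9 : tile) else inord 10].
Definition row_mosaic := Mosaic row_tiles (pair_swap out_ports in_ports).
Definition row_circuit := map west (iota 0 N) ++ map vin (iota 0 N).

Lemma eq_row_port (p q : port 1 N) :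
  (p == q) = (val p.1.2 == val q.1.2) && (val p.2 == val q.2).
Proof.
case: p q => [[i j] s] [[i' j'] s'] /=.
rewrite (ord1 i) (ord1 i').
by apply/eqP/andP => [[-> ->]|[/eqP/val_inj-> /eqP/val_inj->]].
Qed.

Lemma col_vin k : k < N -> val (vin k).1.2 = vtile k.
Proof. by move=> hk; rewrite /= inordK // vtile_lt. Qed.
Lemma col_vout k : k < N -> val (vout k).1.2 = vtile k.
Proof. by move=> hk; rewrite /= inordK // vtile_lt. Qed.
Lemma col_west j : j < N -> val (west j).1.2 = j.
Proof. by move=> hk; rewrite /= inordK. Qed.

Lemma side_vin k : val (vin k).2 = if upward (vtile k) then 2 else 0.
Proof. by rewrite /=; case: upward. Qed.
Lemma side_vout k : val (vout k).2 = if upward (vtile k) then 0 else 2.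
Proof. by rewrite /=; case: upward. Qed.

Lemma mem_iotaN k : (k \in iota 0 N) = (k < N).
Proof. by rewrite mem_iota. Qed.

Lemma vertical_port p : (val p.2 == 0) || (val p.2 == 2) ->
  exists2 k, k < N & (p == vout k) || (p == vin k).
Proof.
move=> hs; have [k hk tk] := vtile_surj (ltn_ord p.1.2); exists k => //.
rewrite !eq_row_port col_vout ?col_vin // side_vout side_vin tk eqxx /=.
by case/orP: hs => /eqP ->; case: upward.
Qed.

Lemma mem_boundary_ports p : (p \in out_ports ++ in_ports) =
  [|| val p.2 == 0, val p.2 == 2, p == east_end | p == west 0].
Proof.
rewrite mem_cat /out_ports /in_ports inE mem_rcons inE -orbA.
apply/idP/idP.
- case/or4P => [->|/mapP[k _ ->]|->|/mapP[k _ ->]]; rewrite ?orbT //.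
  + by rewrite side_vout; case: upward.
  + by rewrite side_vin; case: upward.
- rewrite orbA; case/orP => [/vertical_port [k hk /orP[] /eqP->]|/orP[]->];
    rewrite ?orbT //; apply/or4P; [apply: Or42|apply: Or44];
    by apply/mapP; exists k; rewrite ?mem_iotaN.
Qed.

Lemma uniq_boundary_ports : uniq (out_ports ++ in_ports).
Proof.
have ninj f : (forall k, k < N -> val (f k : port 1 N).1.2 = vtile k) ->
    uniq (map f (iota 0 N)).
  move=> hf; rewrite map_inj_in_uniq ?iota_uniq // => k1 k2.
  rewrite !mem_iotaN => h1 h2 E.
  by apply: vtile_inj => //; rewrite -hf // -[RHS]hf // E.
rewrite cat_uniq /out_ports /in_ports cons_uniq rcons_uniq (ninj vout) ?(ninj vin) ?andbT;
  try exact: col_vout; try exact: col_vin.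
apply/and3P; split.
- apply/negP => /mapP [k _ /eqP].
  by rewrite eq_row_port side_vout; case: upward; rewrite andbF.
- apply/hasPn => x; rewrite mem_rcons in_cons => /orP[/eqP->|/mapP[k hk ->]].
  + rewrite in_cons eq_row_port negb_or; apply/andP; split; first by rewrite /= andbF.
    apply/negP => /mapP [k _ /eqP].
    by rewrite eq_row_port side_vout; case: upward; rewrite andbF.
  + rewrite mem_iotaN in hk; rewrite in_cons eq_row_port side_vin negb_or.
    apply/andP; split; first by rewrite /=; case: upward; rewrite andbF.
    apply/negP => /mapP [k' hk' /eqP]; rewrite mem_iotaN in hk'.
    rewrite eq_row_port col_vin // col_vout // side_vin side_vout.
    case: (vtile k =P vtile k') => [E|] //=; have := vtile_inj hk hk' E => <-.
    by case: upward.
- apply/negP => /mapP [k _ /eqP].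
  by rewrite eq_row_port side_vin; case: upward; rewrite andbF.
Qed.

Lemma boundary_row (p : port 1 N) : boundary p = (p \in out_ports ++ in_ports).
Proof.
rewrite mem_boundary_ports !eq_row_port /= inordK //.
case: p => [[i j] [[|[|[|[|s]]]] Hs]] //=; rewrite ?andbT ?andbF ?orbF //.
- by case: i => [[]].
- by case: i => [[]].
Qed.

Lemma crossing_row p : crossing_tile row_mosaic p.
Proof. by rewrite /crossing_tile /tile_at /= ffunE; case: ifP => _; rewrite inordK. Qed.

Lemma partner_row p : partner row_mosaic p = (p.1, inord ((p.2 + 2) %% 4)).
Proof. exact: (crossing_partner (crossing_row p)).2. Qed.

Lemma cp_row p : cp row_mosaic p.
Proof. exact: (crossing_partner (crossing_row p)).1. Qed.

Lemma size_boundary_ports : size out_ports = size in_ports.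
Proof. by rewrite /out_ports /in_ports size_rcons /= !size_map. Qed.

Lemma swap_out_ports x k : k < size out_ports ->
  pair_swap out_ports in_ports (nth x out_ports k) = nth x in_ports k.
Proof. exact: (pair_swapA uniq_boundary_ports size_boundary_ports). Qed.

Lemma nth_in_ports x k : k < N -> nth x in_ports k = vin k.
Proof.
move=> hk; rewrite /in_ports nth_rcons size_map size_iota hk.
by rewrite (nth_map 0) ?size_iota // nth_iota.
Qed.
Lemma nth_in_ports_last x : nth x in_ports N = west 0.
Proof. by rewrite /in_ports nth_rcons size_map size_iota ltnn eqxx. Qed.
Lemma nth_out_ports x k : k < N -> nth x out_ports k.+1 = vout k.
Proof.
move=> hk; have -> : nth x out_ports k.+1 = nth x (map vout (iota 0 N)) k by [].
by rewrite (nth_map 0) ?size_iota // nth_iota.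
Qed.

Lemma nextp_boundary p : p \in out_ports ++ in_ports ->
  nextp row_mosaic p = pair_swap out_ports in_ports p.
Proof. by rewrite /nextp -boundary_row => ->. Qed.

Lemma step_west j : j < n' -> step row_mosaic (west j) = west j.+1.
Proof.
move=> hj; rewrite /step partner_row.
have -> : ((west j).1, inord (((west j).2 + 2) %% 4)) = (ord0, inord j, sE) :> port 1 N.
  by apply/eqP; rewrite eq_row_port /= eqxx inordK.
have ij : (inord j : 'I_N) = j :> nat by rewrite inordK //; lia.
rewrite /nextp boundary_row mem_boundary_ports !eq_row_port /= ij andbF orbF.
have -> : (j == n') = false by apply/eqP; lia.
rewrite /neighbor /=; apply/eqP.
by rewrite eq_row_port /= val_insubd_lt ?inordK ?eqxx //; lia.
Qed.

Lemma step_west_last : step row_mosaic (west n') = vin 0.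
Proof.
rewrite /step partner_row.
have -> : ((west n').1, inord (((west n').2 + 2) %% 4)) = nth east_end out_ports 0.
  by apply/eqP; rewrite eq_row_port /= inordK // eqxx inordK.
have hA : 0 < size out_ports by [].
rewrite nextp_boundary ?mem_cat ?mem_nth // swap_out_ports // nth_in_ports //.
Qed.

Lemma step_vin k : k < N -> step row_mosaic (vin k) = nth (west 0) in_ports k.+1.
Proof.
move=> hk; rewrite /step partner_row.
have -> : ((vin k).1, inord (((vin k).2 + 2) %% 4)) = nth east_end out_ports k.+1.
  rewrite nth_out_ports //; apply/eqP; rewrite eq_row_port /vin /vout /=.
  by case: (upward (vtile k)); rewrite eqxx inordK.
have hA : k.+1 < size out_ports by rewrite /out_ports /= size_map size_iota.
rewrite nextp_boundary ?mem_cat ?mem_nth // swap_out_ports //.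
by apply: set_nth_default; rewrite -size_boundary_ports.
Qed.

Definition row_circuit_nth k : port 1 N := if k < N then west k else vin (k - N).

Lemma nth_row_circuit k : k < N.*2 -> nth (west 0) row_circuit k = row_circuit_nth k.
Proof.
move=> hk; rewrite /row_circuit /row_circuit_nth nth_cat size_map size_iota.
case: ifP => hk1; first by rewrite (nth_map 0) ?size_iota // nth_iota.
by rewrite (nth_map 0) ?size_iota ?nth_iota //; lia.
Qed.

Lemma iter_step_row k : k < N.*2 ->
  iter k (step row_mosaic) (west 0) = row_circuit_nth k.
Proof.
elim: k => [|k IH] hk; first by [].
rewrite iterS IH; last by lia.
rewrite /row_circuit_nth.
case: (ltnP k.+1 N) => h1.
  by rewrite (ltnW h1) step_west.
case: (ltnP k N) => h2.
  have -> : k = n' by lia.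
  by rewrite step_west_last subnn.
rewrite step_vin; last by lia.
by rewrite nth_in_ports ?subSn //; lia.
Qed.

Lemma iter_step_row_period : iter N.*2 (step row_mosaic) (west 0) = west 0.
Proof.
have -> : N.*2 = (n' + N).+1 by lia.
rewrite iterS iter_step_row; last by lia.
rewrite /row_circuit_nth ltnNge leq_addl /= addnK step_vin // nth_in_ports_last //.
Qed.

Lemma uniq_row_circuit : uniq row_circuit.
Proof.
rewrite /row_circuit cat_uniq; apply/and3P; split.
- rewrite map_inj_in_uniq ?iota_uniq // => j1 j2; rewrite !mem_iotaN => h1 h2 E.
  by rewrite -(col_west h1) -(col_west h2) E.
- apply/hasPn => x /mapP[k _ ->]; apply/negP => /mapP[j _ /eqP].
  by rewrite eq_row_port side_vin; case: upward; rewrite andbF.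
- rewrite map_inj_in_uniq ?iota_uniq // => j1 j2; rewrite !mem_iotaN => h1 h2 E.
  by apply: vtile_inj => //; rewrite -(col_vin h1) -(col_vin h2) E.
Qed.

Lemma row_circuit_traject : row_circuit = traject (step row_mosaic) (west 0) N.*2.
Proof.
apply: (@eq_from_nth _ (west 0)).
  by rewrite size_traject /row_circuit size_cat !size_map size_iota; lia.
move=> k; rewrite /row_circuit size_cat !size_map size_iota => hk.
rewrite nth_traject; last by lia.
by rewrite -/row_circuit nth_row_circuit ?iter_step_row //; lia.
Qed.

Lemma fcycle_row_circuit : fcycle (step row_mosaic) row_circuit.
Proof.
rewrite row_circuit_traject; have E : N.*2 = (N.*2.-1).+1 by lia.
move: iter_step_row_period; rewrite E; move: (N.*2.-1) => m H.
rewrite trajectS /=.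
have -> : rcons (traject (step row_mosaic) (step row_mosaic (west 0)) m) (west 0) =
          traject (step row_mosaic) (step row_mosaic (west 0)) m.+1.
  by rewrite trajectSr -iterSr H.
exact: fpath_traject.
Qed.

Lemma orbit_row : orbit (step row_mosaic) (west 0) = row_circuit.
Proof.
have hW : west 0 \in row_circuit.
  by rewrite /row_circuit mem_cat; apply/orP; left; apply/mapP; exists 0.
rewrite (orbitE fcycle_row_circuit uniq_row_circuit hW).
have -> : index (west 0) row_circuit = 0 by rewrite /row_circuit /= eqxx.
exact: rot0.
Qed.

Lemma west_in_row_circuit (t : 'I_1 * 'I_N) : (t, sW) \in row_circuit.
Proof.
rewrite /row_circuit mem_cat; apply/orP; left; apply/mapP; exists (val t.2).
  by rewrite mem_iotaN ltn_ord.
by apply/eqP; rewrite eq_row_port col_west ?ltn_ord // eqxx.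
Qed.

Lemma south_in_row_circuit (t : 'I_1 * 'I_N) : ((t, sS) \in row_circuit) = upward t.2.
Proof.
rewrite /row_circuit mem_cat; apply/idP/idP.
- case/orP => /mapP [k hk /eqP]; rewrite eq_row_port /=.
  + by rewrite andbF.
  + rewrite mem_iotaN in hk; rewrite inordK ?vtile_lt // /vin /=.
    by case: (nat_of_ord t.2 =P vtile k) => // ->; case: (upward (vtile k)).
- move=> hn; apply/orP; right; have [k hk tk] := vtile_surj (ltn_ord t.2).
  apply/mapP; exists k; rewrite ?mem_iotaN //.
  by apply/eqP; rewrite eq_row_port col_vin // side_vin tk hn eqxx.
Qed.

Lemma tile9_row (t : 'I_1 * 'I_N) : (val (mtile row_mosaic t) == 9) = ovr (hent t.2).
Proof. by rewrite /= ffunE; case: ifP => _; rewrite inordK. Qed.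

Lemma sgn_of_row p : sgn_of row_mosaic (west 0) p = sgn (hent p.1.2).
Proof.
rewrite /sgn_of /tile_at tile9_row !fconnect_orbit orbit_row.
rewrite west_in_row_circuit south_in_row_circuit /upward.
by case: (ovr _); case: (sgn _).
Qed.

Local Notation read p := (lab_of p, ovr_of row_mosaic p, sgn_of row_mosaic (west 0) p).

Lemma read_west j : j < N -> read (west j) = (j, ovr (hent j), sgn (hent j)).
Proof.
move=> hj; rewrite sgn_of_row /lab_of /ovr_of /tile_at tile9_row /= !inordK //.
by case: (ovr _).
Qed.

Lemma read_vin k : k < N ->
  read (vin k) = (vtile k, ~~ ovr (hent (vtile k)), sgn (hent (vtile k))).
Proof.
move=> hk; rewrite sgn_of_row /lab_of /ovr_of /tile_at tile9_row /=.
by rewrite !inordK ?vtile_lt //; case: (ovr _); case: (upward _).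
Qed.

Lemma read_code_row : read_code row_mosaic (west 0) = index_relabel h (h ++ v).
Proof.
rewrite /read_code -/(orbit (step row_mosaic) (west 0)) orbit_row.
rewrite (eq_in_filter (a2 := predT)); last by move=> x _; rewrite crossing_row.
have Eh : h = map hent (iota 0 N) by rewrite -hh; exact/esym/mkseq_nth.
have Ev : v = map (nth ent0 v) (iota 0 N) by rewrite -hv; exact/esym/mkseq_nth.
rewrite {2}Eh {1}Ev.
rewrite filter_predT /row_circuit /index_relabel !map_cat -!map_comp.
congr (_ ++ _); apply/eq_in_map => k; rewrite mem_iotaN => hk /=.
- by rewrite read_west // lab_hent // index_uniq ?size_labels_h.
- have hk' : k < size v by rewrite hv.
  by rewrite read_vin //; have [-> ->] := hvd (mem_nth ent0 hk').
Qed.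

Lemma north_in_row_circuit (t : 'I_1 * 'I_N) :
  ((t, sN) \in row_circuit) = ~~ upward t.2.
Proof.
rewrite /row_circuit mem_cat; apply/idP/idP.
- case/orP => /mapP [k hk /eqP]; rewrite eq_row_port /=.
  + by rewrite andbF.
  + rewrite mem_iotaN in hk; rewrite inordK ?vtile_lt // /vin /=.
    by case: (nat_of_ord t.2 =P vtile k) => // ->; case: (upward (vtile k)).
- move=> hn; apply/orP; right; have [k hk tk] := vtile_surj (ltn_ord t.2).
  apply/mapP; exists k; rewrite ?mem_iotaN //.
  by apply/eqP; rewrite eq_row_port col_vin // side_vin tk (negbTE hn) eqxx.
Qed.

Lemma is_vrm_row : is_vrm row_mosaic.
Proof.
split.
- move=> p; rewrite boundary_row => bp.
  have [a1 a2 a3] := pair_swap_inv uniq_boundary_ports size_boundary_ports bp.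
  by split; rewrite ?boundary_row.
- by move=> p; rewrite !cp_row.
exists (west 0); split; first exact: cp_row.
move=> q _; rewrite !fconnect_orbit orbit_row partner_row.
case: q => [t [[|[|[|[|s]]]] Hs]] //=.
- have -> : Ordinal Hs = sN by apply: val_inj.
  have -> : (inord ((0 + 2) %% 4) : side) = sS by apply: val_inj; rewrite /= inordK.
  by case hn: (upward t.2); [right|left];
    rewrite ?north_in_row_circuit ?south_in_row_circuit hn.
- have -> : (inord ((1 + 2) %% 4) : side) = sW by apply: val_inj; rewrite /= inordK.
  by right; rewrite west_in_row_circuit.
- have -> : Ordinal Hs = sS by apply: val_inj.
  have -> : (inord ((2 + 2) %% 4) : side) = sN by apply: val_inj; rewrite /= inordK.
  by case hn: (upward t.2); [left|right];
    rewrite ?north_in_row_circuit ?south_in_row_circuit hn.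
- have -> : Ordinal Hs = sW by apply: val_inj.
  by left; rewrite west_in_row_circuit.
Qed.

End RowMosaic.

Lemma row_mosaic_of_code (w : gcode) n' : gc_wf w -> size w = (n'.+1).*2 ->
  Mw w = n'.+1 -> exists X : mosaic 1 n'.+1, is_vrm X /\ represents X w.
Proof.
set N := n'.+1 => wfw szw Mww.
have w0 : 0 < size w by rewrite szw.
have [i hi] := Mw_witness w0; rewrite Mww => uh.
set w' := rot i w in uh *.
have wfw' : gc_wf w' by exact: gc_wf_rot.
have szw' : size w' = N.*2 by rewrite size_rot.
have hh : size (take N w') = N by rewrite size_take szw'; case: ifP; lia.
have hv : size (drop N w') = N by rewrite size_drop szw'; lia.
have uv := uniq_labels_drop wfw' szw' uh.
have mhv := labels_take_drop wfw' szw' uh.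
exists (row_mosaic n' (take N w') (drop N w')); split.
  exact: is_vrm_row hh hv uh uv mhv.
exists (west n' 0); split; first exact: cp_row.
rewrite (read_code_row hh hv uh uv mhv (mate_drop wfw' szw' uh)).
rewrite cat_take_drop /gequiv; apply: rst_sym.
apply: rst_trans (gequiv_rot (ltnW hi)) (gequiv_index_relabel uh _).
have -> : labels w' = labels (take N w') ++ labels (drop N w').
  by rewrite -map_cat cat_take_drop.
by move=> l; rewrite mem_cat -mhv orbb.
Qed.

Theorem mainTheorem3 (K omega : gcode) (n : nat) :
  gc_wf K -> 0 < n -> crossing_number K n ->
  gc_wf omega -> gequiv omega K -> size omega = n.*2 ->
  Mw omega = n ->
  tile_number K n /\ row_number K n.
Proof.
move=> _; case: n => [|n'] // _ cn wfo eqo szo Mo.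
have [X [vX [q [cq eqq]]]] := row_mosaic_of_code wfo szo Mo.
have rep : represents X K by exists q; split => //; apply: rst_trans eqq eqo.
split; split.
- by exists 1, n'.+1, X; rewrite mul1n.
- by move=> j [a [b [Y [vY rY ->]]]]; exact: crossing_number_le_area vY rY cn.
- by exists X.
- by move=> r [Y [vY rY]]; rewrite -(mul1n r); exact: crossing_number_le_area vY rY cn.
Qed.
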